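(* Let $n,m,\ell\in\mathbb{N}$ with $\ell\geq\lceil\log_2 8n\rceil$, and let $w>1$ be a number representable with $n$ bits of which the first $m$ are its integer part. Let $b=\max\{5\ell,25\}$, let $p\in\mathbb{N}$ with $2^p>w\geq 2^{p-1}$, and let $r$ be a number with $|r-\ln 2|\leq 2^{-b}$. Then the value $\hat{z}=z_p+(p-1)r$ returned by Algorithm LN$(w,n,m,\ell)$ (described in the context, using this $r$) satisfies $$|\hat{z}-\ln w|\leq\left(\frac{3}{4}\right)^{5\ell/2}\left(m+\frac{32}{9}+2\left(\frac{32}{9}+\frac{n}{\ln 2}\right)^3\right).$$
   Context: Fixed precision representation: a number $w\ge 0$ ''given by $n$ bits of which the first $m$ correspond to its integer part'' means $w=\sum_{j=m-n}^{m-1} w^{(j)}2^j$ with $w^{(j)}\in\{0,1\}$. For $x\geq 0$, ''truncating $x$ to $b$ bits after the binary point'' means replacing $x$ by $\lfloor 2^b x\rfloor/2^b$. All arithmetic inside a step is performed exactly; only the stated truncations introduce error. Algorithm SQRT$(w,n,m,b)$ (input $w\geq 1$): if $w=1$, return $1$. Otherwise: let $p'\in\mathbb{N}$ with $2^{p'}>w\geq 2^{p'-1}$ and set $\hat{x}_0=2^{-p'}$; let $s=\lceil\log_2 b\rceil$; for $i=1,\dots,s$ compute exactly $x_i=-w\hat{x}_{i-1}^2+2\hat{x}_{i-1}$ and let $\hat{x}_i$ be $x_i$ truncated to $b$ bits after the binary point. Then let $q\in\mathbb{N}$ with $2^{1-q}>\hat{x}_s\geq 2^{-q}$ and set $\hat{y}_0=2^{\lfloor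 (q-1)/2\rfloor}$; for $j=1,\dots,s$ compute exactly $y_j=\frac12(3\hat{y}_{j-1}-\hat{x}_s\hat{y}_{j-1}^3)$ and let $\hat{y}_j$ be $y_j$ truncated to $b$ bits. Return $\hat{y}_s$. Algorithm PowerOf2Roots$(w,k,n,m,b)$: set $\hat{z}_1=$ SQRT$(w,n,m,b)$; for $i=2,\dots,k$ set $\hat{z}_i=$ SQRT$(\hat{z}_{i-1},m+b,m,b)$. Return $\hat{z}_1,\dots,\hat{z}_k$. Algorithm LN$(w,n,m,\ell)$ (input $w\geq 1$): set $b=\max\{5\ell,25\}$ and let $r$ be a $b$-bit approximation of $\ln 2$ with $|r-\ln 2|\le 2^{-b}$. If $w=1$ return $0$. Let $p\in\mathbb{N}$ with $2^p>w\geq 2^{p-1}$ and set $w_p=2^{1-p}w\in[1,2)$ (computed exactly, represented with $n$ bits of which $1$ is integer). If $w_p=1$, set $z_p=0$. Otherwise let $\hat{t}_p$ be the last output $\hat{z}_\ell$ of PowerOf2Roots$(w_p,\ell,n,1,b)$, let $\hat{y}_p$ be $(\hat{t}_p-1)-\frac12(\hat{t}_p-1)^2$ truncated to $b$ bits after the binary point, and set $z_p=2^\ell\hat{y}_p$. Return $z_p+(p-1)r$. *)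

From Stdlib Require Import Reals ZArith Lra Lia.
Open Scope R_scope.

(* floor and ceiling on R (Int_part r = up r - 1 is the floor of r) *)
Definition Rfloor (x : R) : Z := Int_part x.
Definition Rceil (x : R) : Z := (- Int_part (- x))%Z.
Definition log2 (x : R) : R := ln x / ln 2.

Definition trunc (b : nat) (x : R) : R := IZR (Rfloor (2 ^ b * x)) / 2 ^ b.

(* w = sum_{j=m-n}^{m-1} w^(j) 2^j with bits w^(j) in {0,1};
   the bit of index j = m-n+i is d i, for i = 0..n-1 *)
Fixpoint bitsum (d : nat -> bool) (n m : nat) (k : nat) : R :=
  match k with
  | O => 0
  | S k' => bitsum d n m k' +
            (if d k' then 1 else 0) * powerRZ 2 (Z.of_nat m - Z.of_nat n + Z.of_nat k')
  end.
Definition fixed_repr (n m : nat) (w : R) : Prop :=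
  exists d : nat -> bool, w = bitsum d n m n.

(* Algorithm SQRT(w,n,m,b).  The parameters n, m only describe the
   representation of the input and do not enter the computation. *)
Definition SQRT (w : R) (n m b : nat) : R :=
  if Req_EM_T w 1 then 1 else
  let p' : nat := (Z.to_nat (Rfloor (log2 w)) + 1)%nat in
  let x0 : R := / 2 ^ p' in
  let s : nat := Z.to_nat (Rceil (log2 (INR b))) in
  let xs : R := Nat.iter s (fun x => trunc b (- w * x ^ 2 + 2 * x)) x0 in
  let q : Z := (- Rfloor (log2 xs))%Z in
  let y0 : R := powerRZ 2 ((q - 1) / 2)%Z in
  Nat.iter s (fun y => trunc b ((3 * y - xs * y ^ 3) / 2)) y0.

(* Algorithm PowerOf2Roots(w,k,n,m,b): zhat i for i = 1..k
   (zhat 0 = w is a convenient base case, zhat 1 = SQRT(w,n,m,b),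
    zhat i = SQRT(zhat (i-1), m+b, m, b) for i >= 2). *)
Fixpoint pow2roots (w : R) (n m b : nat) (i : nat) : R :=
  match i with
  | O => w
  | S O => SQRT w n m b
  | S i' => SQRT (pow2roots w n m b i') (m + b) m b
  end.

(* Algorithm LN(w,n,m,l), with the approximation r of ln 2 as a parameter. *)
Definition LN_b (l : nat) : nat := Nat.max (5 * l) 25.

Definition LN (w : R) (n m l : nat) (r : R) : R :=
  let b := LN_b l in
  if Req_EM_T w 1 then 0 else
  let p : nat := (Z.to_nat (Rfloor (log2 w)) + 1)%nat in
  let wp : R := w / 2 ^ (p - 1) in
  let zp : R :=
    if Req_EM_T wp 1 then 0 else
    let t := pow2roots wp n 1 b l in
    let y := trunc b ((t - 1) - / 2 * (t - 1) ^ 2) in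
    2 ^ l * y in
  zp + INR (p - 1) * r.

(* Each truncation to b bits costs at most 2^-b.  In SQRT, the Newton iterations
   for 1/w (started at 1/2) and for the inverse square root of x_s ~ 1/w (started
   at 1) square their residuals 1 - w x and 1 - x y^2 up to O(2^-b) per step, so
   after ceil(log2 b) steps SQRT w = sqrt w (1 + O(2^-b)).  Hence each square root
   of PowerOf2Roots changes 2^i ln zhat_i by O(2^(i-b)), and
   2^l ln t = ln w_p + O(2^(l-b)).  Since t - 1 = O(2^-l), the two-term Taylor
   polynomial of ln(1 + x) at x = t - 1 is off by O(8^-l), i.e. O(4^-l) after
   scaling by 2^l.  Finally ln w = ln w_p + (p-1) ln 2 with p - 1 < m, so using r
   for ln 2 costs at most m 2^-b.  As b >= 5l, each of 2^-b, 2^(l-b) and 4^-l is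
   below (3/4)^(5l/2). *)

From Stdlib Require Import Reals ZArith Lra Lia Psatz.
From Coquelicot Require Import Coquelicot.
Open Scope R_scope.

Lemma pow2_pos (k : nat) : 0 < 2 ^ k.
Proof. apply pow_lt; lra. Qed.

Lemma inv_pow2_le (k b : nat) : (k <= b)%nat -> / 2 ^ b <= / 2 ^ k.
Proof.
  intros Hkb. apply Rinv_le_contravar; [apply pow2_pos|].
  apply Rle_pow; [lra | exact Hkb].
Qed.

Lemma ulp_bounds (b : nat) : (6 <= b)%nat -> 0 < / 2 ^ b <= / 64.
Proof.
  intros Hb. split; [apply Rinv_0_lt_compat, pow2_pos|].
  replace 64 with (2 ^ 6) by (simpl; ring). apply inv_pow2_le, Hb.
Qed.

Lemma trunc_bounds (b : nat) (x : R) : x - / 2 ^ b < trunc b x <= x.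
Proof.
  unfold trunc, Rfloor. pose proof (pow2_pos b) as P.
  destruct (base_Int_part (2 ^ b * x)) as [Hle Hgt].
  set (z := IZR (Int_part (2 ^ b * x))) in *.
  split.
  - apply Rmult_lt_reg_l with (2 ^ b); [exact P|].
    replace (2 ^ b * (z / 2 ^ b)) with z by (field; lra).
    replace (2 ^ b * (x - / 2 ^ b)) with (2 ^ b * x - 1) by (field; lra). lra.
  - apply Rmult_le_reg_l with (2 ^ b); [exact P|].
    replace (2 ^ b * (z / 2 ^ b)) with z by (field; lra). lra.
Qed.

Definition dyadic (b : nat) (a : R) : Prop := exists k : Z, a = IZR k / 2 ^ b.

Lemma trunc_dyadic (b : nat) (x : R) : dyadic b (trunc b x).
Proof. exists (Rfloor (2 ^ b * x)). reflexivity. Qed.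

Lemma dyadic_1 (b : nat) : dyadic b 1.
Proof.
  exists (Z.of_nat (2 ^ b)). rewrite <- INR_IZR_INZ, pow_INR.
  replace (INR 2) with 2 by (simpl; ring).
  field. apply Rgt_not_eq, pow2_pos.
Qed.

Lemma Int_part_ge (k : Z) (y : R) : IZR k <= y -> (k <= Int_part y)%Z.
Proof.
  intros Hky. destruct (base_Int_part y) as [_ Hgt].
  assert (Hlt : (k - 1 < Int_part y)%Z) by (apply lt_IZR; rewrite minus_IZR; simpl; lra).
  lia.
Qed.

(* [trunc b] is the floor on the grid [2^-b Z], so it preserves lower bounds from that grid. *)
Lemma trunc_ge_dyadic (b : nat) (a x : R) : dyadic b a -> a <= x -> a <= trunc b x.
Proof.
  intros [k ->] Hx. unfold trunc, Rfloor, Rdiv. pose proof (pow2_pos b) as P.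
  assert (Hk : IZR k <= 2 ^ b * x).
  { replace (IZR k) with (2 ^ b * (IZR k * / 2 ^ b)) by (field; lra).
    apply Rmult_le_compat_l; lra. }
  apply Rmult_le_compat_r; [left; apply Rinv_0_lt_compat, P|].
  apply IZR_le, Int_part_ge, Hk.
Qed.

Lemma ln2_pos : 0 < ln 2.
Proof. pose proof ln_lt_2. lra. Qed.

Lemma ln2_lt_1 : ln 2 < 1.
Proof.
  rewrite <- (ln_exp 1). apply ln_increasing; [lra|].
  pose proof (exp_ineq1 1 ltac:(lra)). lra.
Qed.

Lemma log2_Rpower2 (y : R) : log2 (Rpower 2 y) = y.
Proof.
  unfold log2, Rpower. rewrite ln_exp. field. apply Rgt_not_eq, ln2_pos.
Qed.

Lemma log2_le (x y : R) : 0 < x -> x <= y -> log2 x <= log2 y.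
Proof.
  intros Hx Hxy. unfold log2, Rdiv. apply Rmult_le_compat_r.
  - left. apply Rinv_0_lt_compat, ln2_pos.
  - apply ln_le; assumption.
Qed.

Lemma log2_lt (x y : R) : 0 < x -> x < y -> log2 x < log2 y.
Proof.
  intros Hx Hxy. unfold log2, Rdiv. apply Rmult_lt_compat_r.
  - apply Rinv_0_lt_compat, ln2_pos.
  - apply ln_increasing; assumption.
Qed.

Lemma Rfloor_log2_eq (x : R) (k : Z) :
  powerRZ 2 k <= x < powerRZ 2 (k + 1) -> Rfloor (log2 x) = k.
Proof.
  intros [Hlo Hhi]. assert (P : 0 < powerRZ 2 k) by (apply powerRZ_lt; lra).
  assert (E : forall j, log2 (powerRZ 2 j) = IZR j).
  { intros j. rewrite powerRZ_Rpower by lra. apply log2_Rpower2. }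
  pose proof (log2_le _ _ P Hlo) as L1. pose proof (log2_lt x _ ltac:(lra) Hhi) as L2.
  rewrite E in L1, L2. rewrite plus_IZR in L2.
  symmetry. apply Int_part_spec. lra.
Qed.

Lemma Rfloor_log2_pow (x : R) (k : nat) :
  2 ^ k <= x < 2 ^ S k -> Z.to_nat (Rfloor (log2 x)) = k.
Proof.
  intros H. rewrite !pow_powerRZ, Nat2Z.inj_succ in H.
  rewrite (Rfloor_log2_eq x (Z.of_nat k) H). apply Nat2Z.id.
Qed.

Lemma Rceil_log2_spec (b : nat) : (2 <= b)%nat ->
  (1 <= Z.to_nat (Rceil (log2 (INR b))))%nat /\
  (b <= 2 ^ Z.to_nat (Rceil (log2 (INR b))))%nat.
Proof.
  intros Hb. set (s := Rceil (log2 (INR b))).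
  assert (Hs : log2 (INR b) <= IZR s).
  { unfold s, Rceil. rewrite opp_IZR. destruct (base_Int_part (- log2 (INR b))). lra. }
  assert (H2 : 2 <= INR b) by (apply (le_INR 2); exact Hb).
  assert (H1 : 1 <= log2 (INR b)).
  { rewrite <- (log2_Rpower2 1), Rpower_1 by lra. apply log2_le; lra. }
  assert (Hs1 : (1 <= s)%Z) by (apply le_IZR; lra).
  split; [lia|].
  apply INR_le. rewrite pow_INR, pow_powerRZ, Z2Nat.id, powerRZ_Rpower by lia || (simpl; lra).
  replace (INR 2) with 2 by (simpl; ring).
  destruct (Rle_or_lt (INR b) (Rpower 2 (IZR s))) as [Hle | Hlt]; [exact Hle|].
  apply log2_lt in Hlt; [|apply exp_pos]. rewrite log2_Rpower2 in Hlt. lra.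
Qed.

Lemma quadratic_error_decay (e : nat -> R) (d : R) :
  0 <= d <= / 16 -> (forall i, 0 <= e i) -> e 0%nat <= / 2 + 2 * d ->
  (forall i, e (S i) <= e i ^ 2 + d) ->
  forall i, (1 <= i)%nat -> e i <= (/ 2) ^ (2 ^ i) + 4 * d.
Proof.
  intros Hd Hpos H0 Hstep i. induction i as [|i IH]; intros Hi; [lia|].
  pose proof (Hstep i) as Hs. pose proof (Hpos i) as Hp.
  replace (2 ^ S i)%nat with (2 ^ i * 2)%nat by (rewrite Nat.pow_succ_r'; lia).
  rewrite pow_mult.
  destruct i as [|i].
  - simpl in *. nra.
  - specialize (IH ltac:(lia)). set (u := (/ 2) ^ 2 ^ S i) in *.
    assert (Hu : 0 <= u <= / 4).
    { unfold u. rewrite pow_inv. split; [left; apply Rinv_0_lt_compat, pow2_pos|].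
      replace 4 with (2 ^ 2) by (simpl; ring). apply inv_pow2_le.
      rewrite Nat.pow_succ_r'. pose proof (Nat.pow_le_mono_r 2 0 i). simpl in *. lia. }
    assert (Hsq : e (S i) ^ 2 <= (u + 4 * d) ^ 2) by (apply pow_incr; lra).
    nra.
Qed.

Lemma halfpow_pow2_le (b s : nat) : (b <= 2 ^ s)%nat -> (/ 2) ^ (2 ^ s) <= / 2 ^ b.
Proof. intros H. rewrite pow_inv. apply inv_pow2_le, H. Qed.

Definition recip_step (b : nat) (w x : R) : R := trunc b (- w * x ^ 2 + 2 * x).

Definition rsqrt_step (b : nat) (x y : R) : R := trunc b ((3 * y - x * y ^ 3) / 2).

Lemma recip_step_error (b : nat) (w x : R) : 0 < w ->
  (1 - w * x) ^ 2 <= 1 - w * recip_step b w x <= (1 - w * x) ^ 2 + w * / 2 ^ b.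
Proof.
  intros Hw. unfold recip_step.
  destruct (trunc_bounds b (- w * x ^ 2 + 2 * x)) as [Hlo Hhi].
  set (t := trunc b (- w * x ^ 2 + 2 * x)) in *.
  split.
  - assert (w * t <= w * (- w * x ^ 2 + 2 * x)) by (apply Rmult_le_compat_l; lra). nra.
  - assert (w * (- w * x ^ 2 + 2 * x - / 2 ^ b) <= w * t) by (apply Rmult_le_compat_l; lra). nra.
Qed.

Lemma recip_iter_error (b s : nat) (w : R) :
  (6 <= b)%nat -> (1 <= s)%nat -> (b <= 2 ^ s)%nat -> 1 < w < 2 ->
  0 <= 1 - w * Nat.iter s (recip_step b w) (/ 2) <= 9 * / 2 ^ b.
Proof.
  intros Hb Hs1 Hs2 Hw. pose proof (halfpow_pow2_le b s Hs2) as Hhalf.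
  destruct (ulp_bounds b Hb) as [c0 Hc]. set (c := / 2 ^ b) in *.
  set (e i := 1 - w * Nat.iter i (recip_step b w) (/ 2)).
  assert (Hstep : forall i, e i ^ 2 <= e (S i) <= e i ^ 2 + 2 * c).
  { intros i. destruct (recip_step_error b w (Nat.iter i (recip_step b w) (/ 2))) as [H1 H2];
      [lra|]. fold c in H2. unfold e. simpl Nat.iter. split; [exact H1 | nra]. }
  assert (Hpos : forall i, 0 <= e i).
  { intros [|i]; [unfold e; simpl; lra|].
    pose proof (Hstep i). pose proof (pow2_ge_0 (e i)). lra. }
  split; [apply Hpos|].
  pose proof (quadratic_error_decay e (2 * c)) as D.
  specialize (D ltac:(lra) Hpos ltac:(unfold e; simpl; lra)).
  specialize (D ltac:(intros i; apply Hstep) s Hs1). fold (e s). lra.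
Qed.

Lemma rsqrt_step_spec (b : nat) (x y : R) :
  0 < x -> 1 <= y -> dyadic b y -> 0 <= 1 - x * y ^ 2 ->
  y <= rsqrt_step b x y /\ dyadic b (rsqrt_step b x y) /\
  0 <= 1 - x * rsqrt_step b x y ^ 2 <= (1 - x * y ^ 2) ^ 2 + 2 * / 2 ^ b.
Proof.
  intros Hx Hy Hdy Hf. unfold rsqrt_step.
  set (z := (3 * y - x * y ^ 3) / 2).
  assert (Hz : 1 - x * z ^ 2 = (1 - x * y ^ 2) ^ 2 * (3 + (1 - x * y ^ 2)) / 4)
    by (unfold z; field).
  assert (Hyz : y <= z) by (unfold z; nra).
  set (f := 1 - x * y ^ 2) in *.
  assert (Hf1 : f <= 1) by (unfold f; nra).
  assert (Hz1 : 0 <= 1 - x * z ^ 2 <= f ^ 2) by (rewrite Hz; nra).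
  destruct (trunc_bounds b z) as [Tlo Thi].
  pose proof (trunc_ge_dyadic b y z Hdy Hyz) as Hy'.
  split; [exact Hy'|]. split; [apply trunc_dyadic|].
  set (y' := trunc b z) in *.
  pose proof (inv_pow2_le 0 b ltac:(lia)) as Hc. simpl in Hc.
  set (c := / 2 ^ b) in *.
  assert (Hxz : x * z <= 1) by nra.
  assert (Hup : y' ^ 2 <= z ^ 2) by (apply pow_incr; lra).
  assert (Hlow : (z - c) ^ 2 <= y' ^ 2) by (apply pow_incr; lra).
  assert (x * (z - c) ^ 2 <= x * y' ^ 2) by (apply Rmult_le_compat_l; lra).
  assert (x * z ^ 2 >= x * y' ^ 2) by (apply Rle_ge, Rmult_le_compat_l; lra).
  assert (0 <= x * c ^ 2) by nra.
  assert (x * z * c <= c) by nra.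
  split; nra.
Qed.

Lemma rsqrt_iter_error (b s : nat) (x : R) :
  (6 <= b)%nat -> (1 <= s)%nat -> (b <= 2 ^ s)%nat -> (1 - 9 * / 2 ^ b) / 2 <= x < 1 ->
  1 <= Nat.iter s (rsqrt_step b x) 1 /\
  0 <= 1 - x * Nat.iter s (rsqrt_step b x) 1 ^ 2 <= 13 * / 2 ^ b.
Proof.
  intros Hb Hs1 Hs2 Hx. pose proof (halfpow_pow2_le b s Hs2) as Hhalf.
  destruct (ulp_bounds b Hb) as [c0 Hc]. set (c := / 2 ^ b) in *.
  set (Y i := Nat.iter i (rsqrt_step b x) 1).
  assert (Hinv : forall i, 1 <= Y i /\ dyadic b (Y i) /\ 0 <= 1 - x * Y i ^ 2).
  { induction i as [|i [H1 [H2 H3]]].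
    - simpl. split; [lra|]. split; [apply dyadic_1 | lra].
    - destruct (rsqrt_step_spec b x (Y i)) as [S1 [S2 S3]]; try lra; try assumption.
      change (Y (S i)) with (rsqrt_step b x (Y i)). split; [lra|]. split; [exact S2 | lra]. }
  set (e i := 1 - x * Y i ^ 2).
  assert (Hstep : forall i, e (S i) <= e i ^ 2 + 3 * c).
  { intros i. destruct (Hinv i) as [H1 [H2 H3]].
    destruct (rsqrt_step_spec b x (Y i)) as [_ [_ S3]]; try lra; try assumption.
    fold c in S3. unfold e. change (Y (S i)) with (rsqrt_step b x (Y i)). lra. }
  pose proof (quadratic_error_decay e (3 * c)) as D.
  specialize (D ltac:(lra) ltac:(intros i; apply Hinv) ltac:(unfold e; simpl; lra)).
  specialize (D Hstep s Hs1).
  destruct (Hinv s) as [H1 [_ H3]]. fold (e s) in H3. fold (Y s) (e s). lra.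
Qed.

Lemma SQRT_sq_bounds (w : R) (n m b : nat) : (6 <= b)%nat -> 1 <= w < 2 ->
  1 <= SQRT w n m b /\
  w * (1 - 13 * / 2 ^ b) <= SQRT w n m b ^ 2 <= w * (1 + 18 * / 2 ^ b).
Proof.
  intros Hb Hw. destruct (ulp_bounds b Hb) as [c0 Hc]. set (c := / 2 ^ b) in *.
  unfold SQRT. destruct (Req_EM_T w 1) as [->|Hne]; [simpl; split; nra|]. cbv zeta.
  rewrite (Rfloor_log2_pow w 0) by (simpl; lra).
  destruct (Rceil_log2_spec b ltac:(lia)) as [Hs1 Hs2].
  set (s := Z.to_nat (Rceil (log2 (INR b)))) in *.
  replace (/ 2 ^ (0 + 1)) with (/ 2) by (simpl; field).
  change (fun x => trunc b (- w * x ^ 2 + 2 * x)) with (recip_step b w).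
  destruct (recip_iter_error b s w Hb Hs1 Hs2 ltac:(lra)) as [E0 E1]. fold c in E1.
  set (xs := Nat.iter s (recip_step b w) (/ 2)) in *.
  assert (Hxs : (1 - 9 * c) / 2 <= xs < 1) by (split; nra).
  (* [x_s] lies in [[1/4, 1)], so SQRT starts its second iteration at [y_0 = 1]. *)
  assert (Hy0 : powerRZ 2 ((- Rfloor (log2 xs) - 1) / 2) = 1).
  { destruct (Rlt_or_le xs (/ 2)).
    - rewrite (Rfloor_log2_eq xs (-2)) by (simpl; lra). reflexivity.
    - rewrite (Rfloor_log2_eq xs (-1)) by (simpl; lra). reflexivity. }
  rewrite Hy0.
  change (fun y => trunc b ((3 * y - xs * y ^ 3) / 2)) with (rsqrt_step b xs).
  destruct (rsqrt_iter_error b s xs Hb Hs1 Hs2 Hxs) as [Y1 [F0 F1]]. fold c in F1.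
  set (y := Nat.iter s (rsqrt_step b xs) 1) in *.
  assert (Hy2 : 1 <= y ^ 2) by nra.
  split; [exact Y1|]. split.
  - assert (y ^ 2 * (xs * w) <= y ^ 2) by nra. nra.
  - assert (y ^ 2 * (1 - 9 * c) <= w) by nra. nra.
Qed.

Lemma ln_1p_le (x : R) : -1 < x -> ln (1 + x) <= x.
Proof.
  intros Hx. rewrite <- (ln_exp x) at 2. apply ln_le; [lra | apply exp_ineq1_le].
Qed.

Lemma ln_1m_ge (u : R) : 0 <= u <= / 2 -> - (2 * u) <= ln (1 - u).
Proof.
  intros Hu.
  replace (1 - u) with (/ (1 + u / (1 - u))) by (field; lra).
  rewrite ln_Rinv by (apply Rplus_lt_le_0_compat; [lra | apply Rdiv_le_0_compat; lra]).
  pose proof (ln_1p_le (u / (1 - u)) ltac:(apply Rlt_le_trans with 0; [lra | apply Rdiv_le_0_compat; lra])).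
  assert (u / (1 - u) <= 2 * u) by (apply Rmult_le_reg_r with (1 - u); [lra | field_simplify; nra]).
  lra.
Qed.

Lemma SQRT_ln_error (w : R) (n m b : nat) : (6 <= b)%nat -> 1 <= w < 2 ->
  1 <= SQRT w n m b < 2 /\ Rabs (2 * ln (SQRT w n m b) - ln w) <= 26 * / 2 ^ b.
Proof.
  intros Hb Hw. destruct (SQRT_sq_bounds w n m b Hb Hw) as [Y [Lo Hi]].
  destruct (ulp_bounds b Hb) as [c0 Hc]. set (c := / 2 ^ b) in *. set (y := SQRT w n m b) in *.
  split; [split; nra|].
  replace (2 * ln y) with (ln (y ^ 2)) by (rewrite ln_pow by lra; simpl; ring).
  assert (L : ln (w * (1 - 13 * c)) <= ln (y ^ 2)) by (apply ln_le; nra).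
  assert (U : ln (y ^ 2) <= ln (w * (1 + 18 * c))) by (apply ln_le; nra).
  rewrite ln_mult in L, U by lra.
  pose proof (ln_1m_ge (13 * c) ltac:(lra)). pose proof (ln_1p_le (18 * c) ltac:(lra)).
  apply Rabs_le. lra.
Qed.

(* SQRT does not use its parameters [n] and [m]. *)
Lemma pow2roots_S (w : R) (n m b i : nat) :
  pow2roots w n m b (S i) = SQRT (pow2roots w n m b i) 0 0 b.
Proof. destruct i; reflexivity. Qed.

Lemma pow2roots_ln_error (w : R) (n m b : nat) : (6 <= b)%nat -> 1 <= w < 2 -> forall i,
  1 <= pow2roots w n m b i < 2 /\
  Rabs (2 ^ i * ln (pow2roots w n m b i) - ln w) <= 2 ^ i * (26 * / 2 ^ b).
Proof.
  intros Hb Hw i. destruct (ulp_bounds b Hb) as [c0 _].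
  induction i as [|i [IH1 IH2]].
  - simpl. split; [exact Hw|]. rewrite Rmult_1_l, Rminus_diag, Rabs_R0. lra.
  - rewrite pow2roots_S.
    destruct (SQRT_ln_error (pow2roots w n m b i) 0 0 b Hb IH1) as [S1 S2].
    split; [exact S1|].
    set (t := pow2roots w n m b i) in *. set (t' := SQRT t 0 0 b) in *.
    pose proof (pow2_pos i) as Pi.
    replace (2 ^ S i * ln t' - ln w) with (2 ^ i * (2 * ln t' - ln t) + (2 ^ i * ln t - ln w))
      by (simpl; ring).
    eapply Rle_trans; [apply Rabs_triang|].
    rewrite Rabs_mult, (Rabs_right (2 ^ i)) by lra.
    assert (2 ^ i * Rabs (2 * ln t' - ln t) <= 2 ^ i * (26 * / 2 ^ b))
      by (apply Rmult_le_compat_l; lra).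
    simpl. lra.
Qed.

Lemma ln_1p_taylor (v : R) : 0 <= v ->
  v - v ^ 2 / 2 <= ln (1 + v) <= v - v ^ 2 / 2 + v ^ 3 / 3.
Proof.
  intros Hv. destruct (Rle_lt_or_eq_dec _ _ Hv) as [Hp | <-].
  2: { rewrite Rplus_0_r, ln_1. simpl. lra. }
  split.
  - destruct (MVT_cor2 (fun x => ln (1 + x) - x + x ^ 2 / 2) (fun x => / (1 + x) - 1 + x) 0 v Hp)
      as [c [Hc1 Hc2]].
    { intros c Hc. apply is_derive_Reals. auto_derive; [lra | field; lra]. }
    rewrite Rplus_0_r, ln_1 in Hc1.
    assert (/ (1 + c) - 1 + c = c ^ 2 / (1 + c)) by (field; lra).
    assert (0 <= c ^ 2 / (1 + c)) by (apply Rdiv_le_0_compat; nra).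
    simpl in *. nra.
  - destruct (MVT_cor2 (fun x => x - x ^ 2 / 2 + x ^ 3 / 3 - ln (1 + x))
      (fun x => 1 - x + x ^ 2 - / (1 + x)) 0 v Hp) as [c [Hc1 Hc2]].
    { intros c Hc. apply is_derive_Reals. auto_derive; [lra | field; lra]. }
    rewrite Rplus_0_r, ln_1 in Hc1.
    assert (1 - c + c ^ 2 - / (1 + c) = c ^ 3 / (1 + c)) by (field; lra).
    assert (0 <= c ^ 3 / (1 + c)) by (apply Rdiv_le_0_compat; [apply pow_le |]; lra).
    simpl in *. nra.
Qed.

Definition tol (l : nat) : R := Rpower (3 / 4) (5 * INR l / 2).

Lemma tol_pos (l : nat) : 0 < tol l.
Proof. apply exp_pos. Qed.

Lemma tol_sq (l : nat) : tol l * tol l = (243 / 1024) ^ l.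
Proof.
  unfold tol. rewrite <- Rpower_plus.
  replace (5 * INR l / 2 + 5 * INR l / 2) with (INR (5 * l)) by (rewrite mult_INR; simpl; field).
  rewrite Rpower_pow, pow_mult by lra. f_equal. simpl. field.
Qed.

Lemma pow_le_tol (a : R) (l : nat) : 0 <= a -> a ^ 2 <= 243 / 1024 -> a ^ l <= tol l.
Proof.
  intros Ha Ha2. pose proof (tol_pos l).
  assert (a ^ l * a ^ l <= tol l * tol l).
  { rewrite tol_sq, <- Rpow_mult_distr. apply pow_incr. simpl in *. nra. }
  pose proof (pow_le a l Ha). nra.
Qed.

Lemma scaled_ulp_le_tol (b l : nat) : (5 * l <= b)%nat -> 2 ^ l * / 2 ^ b <= tol l.
Proof.
  intros H. apply Rle_trans with ((/ 16) ^ l); [|apply pow_le_tol; lra].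
  replace (/ 16) with (2 * / 32) by field. rewrite Rpow_mult_distr.
  apply Rmult_le_compat_l; [left; apply pow2_pos|].
  replace (/ 32) with (/ 2 ^ 5) by (simpl; field). rewrite pow_inv, <- pow_mult.
  apply inv_pow2_le, H.
Qed.

Lemma ulp_le_tol (b l : nat) : (5 * l <= b)%nat -> / 2 ^ b <= tol l.
Proof.
  intros H. apply Rle_trans with (2 ^ l * / 2 ^ b); [|apply scaled_ulp_le_tol, H].
  pose proof (Rle_pow 2 0 l ltac:(lra) ltac:(lia)) as H1. simpl in H1.
  assert (0 < / 2 ^ b) by (apply Rinv_0_lt_compat, pow2_pos). nra.
Qed.

Lemma scaled_ulp_small (b l : nat) : (l + 10 <= b)%nat -> 2 ^ l * / 2 ^ b <= / 1024.
Proof.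
  intros H. replace b with (l + (b - l))%nat by lia. rewrite pow_add.
  pose proof (pow2_pos l). pose proof (pow2_pos (b - l)).
  replace (2 ^ l * / (2 ^ l * 2 ^ (b - l))) with (/ 2 ^ (b - l)) by (field; lra).
  replace 1024 with (2 ^ 10) by (simpl; ring). apply inv_pow2_le. lia.
Qed.

Lemma scaled_log_taylor_error (l : nat) (t : R) : 1 <= t < 2 -> 2 ^ l * ln t <= 1.03 ->
  0 <= 2 ^ l * (ln t - ((t - 1) - / 2 * (t - 1) ^ 2)) <= 3 * tol l.
Proof.
  intros Ht Hlnt. set (v := t - 1). pose proof (pow2_pos l) as Pl.
  destruct (ln_1p_taylor v ltac:(unfold v; lra)) as [Lo Hi].
  replace (1 + v) with t in Lo, Hi by (unfold v; ring).
  assert (Hv : 0 <= v < 1) by (unfold v; lra).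
  (* [v <= 2 ln t = O(2^-l)], so the neglected cubic term [v^3/3] is [O(8^-l)]. *)
  assert (Hvl : 0 <= 2 ^ l * v <= 2.06) by (split; nra).
  assert (Hcube : 2 ^ l * v ^ 3 = (2 ^ l * v) ^ 3 * (/ 4) ^ l).
  { assert (E : 2 ^ l * 2 ^ l * (/ 4) ^ l = 1).
    { rewrite <- !Rpow_mult_distr. replace (2 * 2 * / 4) with 1 by field. apply pow1. }
    transitivity (2 ^ l * v ^ 3 * (2 ^ l * 2 ^ l * (/ 4) ^ l)); [rewrite E; ring | ring]. }
  assert ((2 ^ l * v) ^ 3 <= 2.06 ^ 3) by (apply pow_incr; lra).
  pose proof (pow_le_tol (/ 4) l ltac:(lra) ltac:(simpl; lra)).
  pose proof (pow_le (/ 4) l ltac:(lra)).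
  split; nra.
Qed.

Lemma mantissa_ln_error (b l n : nat) (wp : R) :
  (5 * l <= b)%nat -> (l + 10 <= b)%nat -> 1 <= wp < 2 ->
  Rabs (2 ^ l * trunc b ((pow2roots wp n 1 b l - 1) - / 2 * (pow2roots wp n 1 b l - 1) ^ 2)
        - ln wp) <= 30 * tol l.
Proof.
  intros Hb5 Hb10 Hwp.
  pose proof (scaled_ulp_le_tol b l Hb5) as Htol. pose proof (scaled_ulp_small b l Hb10) as Hsmall.
  destruct (pow2roots_ln_error wp n 1 b ltac:(lia) Hwp l) as [Ht Hroot].
  apply Rabs_le_between in Hroot.
  set (t := pow2roots wp n 1 b l) in *. set (s := (t - 1) - / 2 * (t - 1) ^ 2).
  pose proof ln2_lt_1. assert (ln wp < ln 2) by (apply ln_increasing; lra).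
  destruct (scaled_log_taylor_error l t Ht ltac:(lra)) as [Lo Hi]. fold s in Lo, Hi.
  destruct (trunc_bounds b s) as [Tlo Thi].
  pose proof (pow2_pos l) as Pl.
  assert (Htrunc : 2 ^ l * (s - / 2 ^ b) <= 2 ^ l * trunc b s <= 2 ^ l * s)
    by (split; apply Rmult_le_compat_l; lra).
  apply Rabs_le. lra.
Qed.

Lemma bitsum_lt (d : nat -> bool) (n m k : nat) :
  bitsum d n m k <= powerRZ 2 (Z.of_nat m - Z.of_nat n + Z.of_nat k) - powerRZ 2 (Z.of_nat m - Z.of_nat n).
Proof.
  induction k as [|k IH]; simpl bitsum.
  - rewrite Z.add_0_r. lra.
  - rewrite Nat2Z.inj_succ, <- Z.add_1_r, Z.add_assoc.
    rewrite (powerRZ_add 2 (Z.of_nat m - Z.of_nat n + Z.of_nat k) 1) by lra.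
    pose proof (powerRZ_lt 2 (Z.of_nat m - Z.of_nat n + Z.of_nat k) ltac:(lra)).
    simpl powerRZ. destruct (d k); lra.
Qed.

Lemma fixed_repr_lt_pow2 (n m : nat) (w : R) : fixed_repr n m w -> w < 2 ^ m.
Proof.
  intros [d ->]. eapply Rle_lt_trans; [apply bitsum_lt|].
  replace (Z.of_nat m - Z.of_nat n + Z.of_nat n)%Z with (Z.of_nat m) by lia.
  rewrite <- pow_powerRZ. pose proof (powerRZ_lt 2 (Z.of_nat m - Z.of_nat n) ltac:(lra)). lra.
Qed.

Definition zp (b l n : nat) (wp : R) : R :=
  if Req_EM_T wp 1 then 0 else
  2 ^ l * trunc b ((pow2roots wp n 1 b l - 1) - / 2 * (pow2roots wp n 1 b l - 1) ^ 2).

Lemma zp_ln_error (b l n : nat) (wp : R) :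
  (5 * l <= b)%nat -> (l + 10 <= b)%nat -> 1 <= wp < 2 ->
  Rabs (zp b l n wp - ln wp) <= 30 * tol l.
Proof.
  intros Hb5 Hb10 Hwp. unfold zp. destruct (Req_EM_T wp 1) as [->|_].
  - rewrite ln_1, Rminus_diag, Rabs_R0. pose proof (tol_pos l). lra.
  - apply mantissa_ln_error; assumption.
Qed.

Lemma LN_eq (w r : R) (n m l k : nat) : 1 < w -> 2 ^ k <= w < 2 ^ S k ->
  LN w n m l r = zp (LN_b l) l n (w / 2 ^ k) + INR k * r.
Proof.
  intros Hw Hk. unfold LN, zp. destruct (Req_EM_T w 1) as [|_]; [lra|].
  rewrite (Rfloor_log2_pow w k Hk). replace (k + 1 - 1)%nat with k by lia. reflexivity.
Qed.

Lemma ln_div_pow2 (w : R) (k : nat) : 0 < w -> ln w = ln (w / 2 ^ k) + INR k * ln 2.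
Proof.
  intros Hw. pose proof (pow2_pos k).
  rewrite <- ln_pow, <- ln_mult by (try apply Rdiv_lt_0_compat; lra).
  f_equal. field. lra.
Qed.

Lemma fixed_repr_exponent_lt (n m k : nat) (w : R) : fixed_repr n m w -> 2 ^ k <= w -> (k < m)%nat.
Proof.
  intros Hrepr Hk. pose proof (fixed_repr_lt_pow2 n m w Hrepr).
  destruct (le_lt_dec m k) as [Hmk|]; [|assumption].
  assert (2 ^ m <= 2 ^ k) by (apply Rle_pow; [lra | exact Hmk]). lra.
Qed.

Lemma ln2_multiple_error (b l k m : nat) (r : R) :
  (5 * l <= b)%nat -> (k <= m)%nat -> Rabs (r - ln 2) <= / 2 ^ b ->
  Rabs (INR k * r - INR k * ln 2) <= INR m * tol l.
Proof.
  intros Hb Hkm Hr.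
  rewrite <- Rmult_minus_distr_l, Rabs_mult, Rabs_right by (apply Rle_ge, pos_INR).
  apply Rmult_le_compat; [apply pos_INR | apply Rabs_pos | apply le_INR, Hkm |].
  apply Rle_trans with (/ 2 ^ b); [exact Hr | apply ulp_le_tol, Hb].
Qed.

Theorem theorem3 (n m l : nat) (w r : R) (p : nat) :
  (Rceil (log2 (INR (8 * n))) <= Z.of_nat l)%Z ->
  fixed_repr n m w ->
  1 < w ->
  2 ^ p > w /\ w >= 2 ^ (p - 1) ->
  Rabs (r - ln 2) <= / 2 ^ (LN_b l) ->
  Rabs (LN w n m l r - ln w) <=
    Rpower (3 / 4) (5 * INR l / 2) *
      (INR m + 32 / 9 + 2 * (32 / 9 + INR n / ln 2) ^ 3).
Proof.
  intros _ Hrepr Hw [Hhi Hlo] Hr.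
  change (Rpower (3 / 4) (5 * INR l / 2)) with (tol l).
  destruct p as [|k]; [simpl in Hhi; lra|]. replace (S k - 1)%nat with k in Hlo by lia.
  assert (Hb : (5 * l <= LN_b l)%nat /\ (l + 10 <= LN_b l)%nat) by (unfold LN_b; lia).
  assert (Hwp : 1 <= w / 2 ^ k < 2).
  { pose proof (pow2_pos k). simpl in Hhi.
    split; [apply Rmult_le_reg_r with (2 ^ k) | apply Rmult_lt_reg_r with (2 ^ k)];
      try assumption; field_simplify; lra. }
  rewrite (LN_eq w r n m l k), (ln_div_pow2 w k) by lra.
  pose proof (zp_ln_error (LN_b l) l n (w / 2 ^ k) ltac:(lia) ltac:(lia) Hwp) as Hzp.
  pose proof (ln2_multiple_error (LN_b l) l k m r ltac:(lia)
    (Nat.lt_le_incl _ _ (fixed_repr_exponent_lt n m k w Hrepr ltac:(lra))) Hr) as Hk.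
  assert (Hconst : 30 <= 32 / 9 + 2 * (32 / 9 + INR n / ln 2) ^ 3).
  { assert (0 <= INR n / ln 2) by (apply Rdiv_le_0_compat; [apply pos_INR | apply ln2_pos]).
    assert ((32 / 9) ^ 3 <= (32 / 9 + INR n / ln 2) ^ 3) by (apply pow_incr; lra).
    simpl in *. lra. }
  set (z := zp (LN_b l) l n (w / 2 ^ k)) in *.
  replace (z + INR k * r - (ln (w / 2 ^ k) + INR k * ln 2))
    with ((z - ln (w / 2 ^ k)) + (INR k * r - INR k * ln 2)) by ring.
  eapply Rle_trans; [apply Rabs_triang|].
  pose proof (tol_pos l). nra.
Qed.
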